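(* Let $\lambda>0$ and let $h$ be any left-invariant metric on $G$. Then: (1) the unique inverse-linear path from $h_0$ to $h$ is nonnegative if and only if the unique inverse-linear path from $\lambda h_0$ to $h$ is nonnegative; (2) the unique inverse-linear path from $h_0$ to $h$ is locally nonnegative if and only if the unique inverse-linear path from $\lambda h_0$ to $h$ is locally nonnegative; (3) the unique inverse-linear path from $h_0$ to $h$ is infinitesimally nonnegative if and only if the unique inverse-linear path from $\lambda h_0$ to $h$ is infinitesimally nonnegative.
   Context: $G$ is a compact Lie group with Lie algebra $\mathfrak g$ and bi-invariant metric $h_0$. For a bi-invariant metric $b$ and a left-invariant metric $h$, let $\Phi$ be the $b$-self-adjoint positive definite endomorphism of $\mathfrak g$ with $h(X,Y)=b(\Phi X,Y)$. The unique inverse-linear path from $b$ to $h$ is $\Phi_t=(I-t\Psi)^{-1}$ with $\Psi=I-\Phi^{-1}$, giving left-invariant metrics $h_t(X,Y)=b(\Phi_tX,Y)$ with $h_0$-path starting at $b$ ($t=0$) and ending at $h$ ($t=1$). The unnormalized sectional curvature is $k_h(Z_1,Z_2)=h(R_h(Z_1,Z_2)Z_2,Z_1)$ and for fixed $X,Y\in\mathfrak g$, $\kappa(t)=k_{h_t}(\Phi_t^{-1}X,\Phi_t^{-1}Y)$. The path is nonnegative if $h_t$ has nonnegative sectional curvature for all $0\le t\le1$; infinitesimally nonnegative if for every $X,Y\in\mathfrak g$ there is $\varepsilon>0$ with $\kappa(t)\ge0$ for $t\in[0,\varepsilon)$; locally nonnegative if one $\varepsilon>0$ works for all pairs $X,Y$.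 *)

(* The compact Lie group G enters only through its Lie
   algebra g = R^n (column vectors), with bracket given by structure
   constants c; left-invariant metrics are positive definite symmetric
   matrices M, h(X,Y) = X^T M Y. *)
From HB Require Import structures.
From mathcomp Require Import all_boot all_order all_algebra.
From mathcomp Require Import reals.
Set Implicit Arguments. Unset Strict Implicit. Unset Printing Implicit Defensive.
Import Order.TTheory GRing.Theory Num.Theory.
Local Open Scope ring_scope.

Section LieDefs.
Variables (R : realType) (n : nat).
Implicit Types (c : 'I_n -> 'I_n -> 'I_n -> R) (M B H : 'M[R]_n) (X Y Z : 'cV[R]_n).

(* matrix of ad_X : Y |-> [X,Y], with [e_i,e_j] = sum_k c i j k e_k *)
Definition adm c X : 'M[R]_n := \matrix_(k, j) \sum_i c i j k * X i 0.
Definition bracket c X Y : 'cV[R]_n := adm c X *m Y.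

Definition is_lie_algebra c : Prop :=
  (forall X Y, bracket c X Y = - bracket c Y X) /\
  (forall X Y Z, bracket c X (bracket c Y Z) + bracket c Y (bracket c Z X)
                 + bracket c Z (bracket c X Y) = 0).

Definition ip M X Y : R := (X^T *m M *m Y) 0 0.

Definition is_metric M : Prop :=
  M^T = M /\ forall X, X != 0 -> 0 < ip M X X.

Definition bi_invariant c M : Prop :=
  is_metric M /\
  forall X Y Z, ip M (bracket c X Y) Z + ip M Y (bracket c X Z) = 0.

(* Levi-Civita connection of the left-invariant metric M on left-invariant
   fields: nabla_X Y = 1/2 ([X,Y] - ad_X^* Y - ad_Y^* X), ad^* the M-adjoint *)
Definition adstar c M X : 'M[R]_n := invmx M *m (adm c X)^T *m M.
Definition nabla c M X Y : 'cV[R]_n :=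
  2^-1 *: (bracket c X Y - adstar c M X *m Y - adstar c M Y *m X).
Definition curv c M X Y Z : 'cV[R]_n :=
  nabla c M X (nabla c M Y Z) - nabla c M Y (nabla c M X Z)
  - nabla c M (bracket c X Y) Z.
(* unnormalized sectional curvature k_h(Z1,Z2) = h(R(Z1,Z2)Z2, Z1) *)
Definition seccurv c M X Y : R := ip M (curv c M X Y Y) X.

Definition Phi_of B H : 'M[R]_n := invmx B *m H.       (* h(X,Y) = b(Phi X, Y) *)
Definition Psi_of B H : 'M[R]_n := 1%:M - invmx (Phi_of B H).
Definition Phit B H (t : R) : 'M[R]_n := invmx (1%:M - t *: Psi_of B H).
(* h_t(X,Y) = b(Phi_t X, Y) *)
Definition ht B H (t : R) : 'M[R]_n := (Phit B H t)^T *m B.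

Definition kappa c B H X Y (t : R) : R :=
  seccurv c (ht B H t) (invmx (Phit B H t) *m X) (invmx (Phit B H t) *m Y).

Definition path_nonneg c B H : Prop :=
  forall t : R, 0 <= t <= 1 -> forall X Y, 0 <= seccurv c (ht B H t) X Y.

Definition path_inf_nonneg c B H : Prop :=
  forall X Y, exists2 eps : R, 0 < eps &
    forall t : R, 0 <= t < eps -> 0 <= kappa c B H X Y t.

Definition path_loc_nonneg c B H : Prop :=
  exists2 eps : R, 0 < eps &
    forall X Y (t : R), 0 <= t < eps -> 0 <= kappa c B H X Y t.

End LieDefs.

From HB Require Import structures.
From mathcomp Require Import all_boot all_order all_algebra.
From mathcomp Require Import reals.
From mathcomp Require Import ring lra.
Set Implicit Arguments. Unset Strict Implicit. Unset Printing Implicit Defensive.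
Import Order.TTheory GRing.Theory Num.Theory.
Local Open Scope ring_scope.

(* Scaling the base metric b to mu b only reparametrizes the inverse-linear
   path and rescales it: with k = 1 - t + t mu and s = t mu / k one has
   1 - t Psi_{mu b} = k (1 - s Psi_b), hence h_t^{mu b} = (mu / k) h_s^b.
   Sectional curvature is homogeneous of degree 1 in the metric and of degree
   4 in the vectors, so k_{h_t^{mu b}} = (mu / k) k_{h_s^b} and
   kappa^{mu b}(t) = mu k^3 kappa^b(s).  Since t |-> s is an increasing
   bijection of [0, 1] fixing 0, all three nonnegativity notions transfer, and
   the converse follows by scaling back with 1 / mu. *)

Section ScaleInvariance.
Variables (R : realType) (n : nat) (c : 'I_n -> 'I_n -> 'I_n -> R).
Implicit Types (M B H : 'M[R]_n) (X Y Z : 'cV[R]_n) (a mu t : R).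

Definition posdef M : Prop := forall X, X != 0 -> 0 < ip M X X.

Lemma posdef_unitmx M : posdef M -> M \in unitmx.
Proof.
move=> pdM; apply/negPn/negP => Mnu.
have : kermx M != 0 by rewrite kermx_eq0 row_free_unit.
case/rowV0Pn => v /sub_kermxP vM v0.
have := pdM v^T; rewrite trmx_eq0 v0 => /(_ isT).
by rewrite /ip trmxK vM mul0mx mxE ltxx.
Qed.

Lemma ipZ M a b X Y : ip M (a *: X) (b *: Y) = a * b * ip M X Y.
Proof. by rewrite /ip -scalemxAr linearZ -!scalemxAl !mxE mulrA (mulrC b). Qed.

Lemma ip_scalem a M X Y : ip (a *: M) X Y = a * ip M X Y.
Proof. by rewrite /ip -scalemxAr -scalemxAl mxE. Qed.

Lemma ipDm M1 M2 X Y : ip (M1 + M2) X Y = ip M1 X Y + ip M2 X Y.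
Proof. by rewrite /ip mulmxDr mulmxDl mxE. Qed.

Lemma posdefZ a M : 0 < a -> posdef M -> posdef (a *: M).
Proof. by move=> a0 pdM X X0; rewrite ip_scalem mulr_gt0 ?pdM. Qed.

Lemma admZ a X : adm c (a *: X) = a *: adm c X.
Proof.
apply/matrixP => k j; rewrite !mxE mulr_sumr; apply: eq_bigr => i _.
by rewrite mxE mulrCA.
Qed.

Lemma bracketZl a X Y : bracket c (a *: X) Y = a *: bracket c X Y.
Proof. by rewrite /bracket admZ scalemxAl. Qed.

Lemma bracketZr a X Y : bracket c X (a *: Y) = a *: bracket c X Y.
Proof. by rewrite /bracket scalemxAr. Qed.

Lemma adstarZ M a X : adstar c M (a *: X) = a *: adstar c M X.
Proof. by rewrite /adstar admZ linearZ -scalemxAr -scalemxAl. Qed.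

Lemma adstar_scalem M a : M \in unitmx -> a != 0 ->
  adstar c (a *: M) =1 adstar c M.
Proof.
move=> Mu a0 X; rewrite /adstar invmxZ ?unitmxZ ?unitfE //.
by rewrite -!scalemxAl -scalemxAr scalerA mulVf // scale1r.
Qed.

Lemma nablaZl M a X Y : nabla c M (a *: X) Y = a *: nabla c M X Y.
Proof.
rewrite /nabla bracketZl adstarZ -scalemxAl -scalemxAr.
by rewrite scalerA mulrC -scalerA !scalerBr.
Qed.

Lemma nablaZr M a X Y : nabla c M X (a *: Y) = a *: nabla c M X Y.
Proof.
rewrite /nabla bracketZr adstarZ -scalemxAl -scalemxAr.
by rewrite scalerA mulrC -scalerA !scalerBr.
Qed.

Lemma nabla_scalem M a : M \in unitmx -> a != 0 ->
  nabla c (a *: M) =2 nabla c M.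
Proof. by move=> Mu a0 X Y; rewrite /nabla !adstar_scalem. Qed.

Lemma curvZ M a X Y Z :
  curv c M (a *: X) (a *: Y) (a *: Z) = a ^+ 3 *: curv c M X Y Z.
Proof.
rewrite /curv !(nablaZl, nablaZr, bracketZl, bracketZr).
by rewrite !(scalerA a a) !(scalerA (a * a) a) -!scalerBr -expr2 -exprSr.
Qed.

Lemma seccurvZ M a X Y :
  seccurv c M (a *: X) (a *: Y) = a ^+ 4 * seccurv c M X Y.
Proof. by rewrite /seccurv curvZ ipZ -exprSr. Qed.

Lemma seccurv_scalem M a X Y : M \in unitmx -> a != 0 ->
  seccurv c (a *: M) X Y = a * seccurv c M X Y.
Proof. by move=> Mu a0; rewrite /seccurv ip_scalem /curv !nabla_scalem. Qed.

Definition rescale_time mu t : R := t * mu / (1 - t + t * mu).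

Lemma rescale_time_in01 mu t : 0 < mu -> 0 <= t <= 1 ->
  0 < 1 - t + t * mu /\ 0 <= rescale_time mu t <= 1.
Proof.
move=> mu0 /andP[t0 t1]; have k0 : 0 < 1 - t + t * mu by nra.
split=> //; rewrite /rescale_time; apply/andP; split.
  by rewrite divr_ge0 ?mulr_ge0 // ltW.
by rewrite ler_pdivrMr // mul1r; lra.
Qed.

Lemma rescale_time_near0 mu eps : 0 < mu -> 0 < eps ->
  exists2 delta, 0 < delta &
    forall t, 0 <= t < delta -> 0 <= t <= 1 /\ rescale_time mu t < eps.
Proof.
move=> mu0 eps0; have d0 : 0 < 1 + mu + eps by lra.
exists (eps / (1 + mu + eps)) => [|t /andP[t0]]; first by rewrite divr_gt0.
rewrite ltr_pdivlMr // => te.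
have t1 : t < 1 by nra.
have k0 : 0 < 1 - t + t * mu by nra.
split; first by apply/andP; split; lra.
rewrite /rescale_time ltr_pdivrMr //.
have : mu <= (1 - t + t * mu) * (1 + mu) by nra.
nra.
Qed.

(* Phi (1 - t Psi) = b^-1 ((1 - t) h + t b), and a convex combination of
   positive definite forms is positive definite. *)
Lemma path_unitmx B H t : posdef B -> posdef H -> 0 <= t <= 1 ->
  1%:M - t *: Psi_of B H \in unitmx.
Proof.
move=> pdB pdH /andP[t0 t1].
have Bu := posdef_unitmx pdB; have Hu := posdef_unitmx pdH.
set Phi := Phi_of B H.
have Phiu : Phi \in unitmx by rewrite unitmx_mul unitmx_inv Bu.
suff : Phi *m (1%:M - t *: Psi_of B H) \in unitmx.
  by rewrite unitmx_mul => /andP[].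
have -> : Phi *m (1%:M - t *: Psi_of B H) = invmx B *m ((1 - t) *: H + t *: B).
  rewrite /Psi_of -/Phi mulmxBr mulmx1 -scalemxAr mulmxBr mulmx1 mulmxV //.
  rewrite mulmxDr -!scalemxAr mulVmx //.
  by apply/matrixP => i j; rewrite !mxE; ring.
rewrite unitmx_mul unitmx_inv Bu; apply: posdef_unitmx => X X0.
rewrite ipDm !ip_scalem.
have := pdB X X0; have := pdH X X0; nra.
Qed.

Lemma path_scalem B H mu t : B \in unitmx -> H \in unitmx -> mu != 0 ->
  1 - t + t * mu != 0 ->
  1%:M - t *: Psi_of (mu *: B) H =
  (1 - t + t * mu) *: (1%:M - rescale_time mu t *: Psi_of B H).
Proof.
move=> Bu Hu mu0 k0.
have Phiu : Phi_of B H \in unitmx by rewrite unitmx_mul unitmx_inv Bu.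
rewrite /Psi_of /Phi_of invmxZ ?unitmxZ ?unitfE // -scalemxAl.
rewrite invmxZ ?unitmxZ ?unitfE ?invr_eq0 // invrK.
by apply/matrixP => i j; rewrite !mxE /rescale_time; field.
Qed.

Section Reparametrization.
Variables (B H : 'M[R]_n) (mu t : R).
Hypotheses (pdB : posdef B) (pdH : posdef H) (mu0 : 0 < mu) (t01 : 0 <= t <= 1).

Let k := 1 - t + t * mu.
Let s := rescale_time mu t.

Let k0 : 0 < k. Proof. by case: (rescale_time_in01 mu0 t01). Qed.
Let s01 : 0 <= s <= 1. Proof. by case: (rescale_time_in01 mu0 t01). Qed.

Let path_scalem_at :
  1%:M - t *: Psi_of (mu *: B) H = k *: (1%:M - s *: Psi_of B H).
Proof. by rewrite path_scalem ?posdef_unitmx ?gt_eqF. Qed.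

Lemma ht_scalem : ht (mu *: B) H t = (mu / k) *: ht B H s.
Proof.
have su := path_unitmx pdB pdH s01.
rewrite /ht /Phit path_scalem_at invmxZ ?unitmxZ ?unitfE ?gt_eqF //.
by rewrite -scalemxAr linearZ -scalemxAl scalerA mulrC.
Qed.

Let ht_unitmx : ht B H s \in unitmx.
Proof.
by rewrite unitmx_mul unitmx_tr unitmx_inv path_unitmx ?posdef_unitmx.
Qed.

Let mu_k_neq0 : mu / k != 0. Proof. by rewrite gt_eqF ?divr_gt0. Qed.

Lemma seccurv_ht_scalem X Y :
  seccurv c (ht (mu *: B) H t) X Y = mu / k * seccurv c (ht B H s) X Y.
Proof. by rewrite ht_scalem seccurv_scalem. Qed.

Lemma kappa_scalem X Y :
  kappa c (mu *: B) H X Y t = mu * k ^+ 3 * kappa c B H X Y s.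
Proof.
rewrite /kappa ht_scalem /Phit !invmxK path_scalem_at -!scalemxAl.
by rewrite seccurvZ seccurv_scalem //; field; rewrite gt_eqF.
Qed.

Lemma seccurv_ht_scalem_ge0 X Y :
  0 <= seccurv c (ht B H s) X Y -> 0 <= seccurv c (ht (mu *: B) H t) X Y.
Proof.
by rewrite seccurv_ht_scalem; apply: mulr_ge0; rewrite divr_ge0 ?ltW.
Qed.

Lemma kappa_scalem_ge0 X Y :
  0 <= kappa c B H X Y s -> 0 <= kappa c (mu *: B) H X Y t.
Proof.
by rewrite kappa_scalem; apply: mulr_ge0; rewrite mulr_ge0 ?exprn_ge0 ?ltW.
Qed.

End Reparametrization.

Section Transfer.
Variables (B H : 'M[R]_n) (mu : R).
Hypotheses (pdB : posdef B) (pdH : posdef H) (mu0 : 0 < mu).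

Lemma path_nonneg_scalem : path_nonneg c B H -> path_nonneg c (mu *: B) H.
Proof.
move=> nnB t t01 X Y; apply: seccurv_ht_scalem_ge0 => //.
by apply: nnB; case: (rescale_time_in01 mu0 t01).
Qed.

Lemma path_loc_nonneg_scalem :
  path_loc_nonneg c B H -> path_loc_nonneg c (mu *: B) H.
Proof.
case=> eps eps0 nnB; have [delta delta0 near0] := rescale_time_near0 mu0 eps0.
exists delta => // X Y t /near0[t01 st]; apply: kappa_scalem_ge0 => //.
by apply: nnB; case: (rescale_time_in01 mu0 t01) => _ /andP[-> _].
Qed.

Lemma path_inf_nonneg_scalem :
  path_inf_nonneg c B H -> path_inf_nonneg c (mu *: B) H.
Proof.
move=> nnB X Y; have [eps eps0 {}nnB] := nnB X Y.
have [delta delta0 near0] := rescale_time_near0 mu0 eps0.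
exists delta => // t /near0[t01 st]; apply: kappa_scalem_ge0 => //.
by apply: nnB; case: (rescale_time_in01 mu0 t01) => _ /andP[-> _].
Qed.

End Transfer.

Lemma scalem_invariant (P : 'M[R]_n -> Prop) B lam :
  (forall B mu, posdef B -> 0 < mu -> P B -> P (mu *: B)) ->
  posdef B -> 0 < lam -> P B <-> P (lam *: B).
Proof.
move=> PZ pdB lam0; split; first exact: PZ.
have := PZ (lam *: B) lam^-1 (posdefZ lam0 pdB).
by rewrite scalerK ?gt_eqF // invr_gt0; apply.
Qed.

End ScaleInvariance.

Theorem mainTheorem14 (R : realType) (n : nat)
    (c : 'I_n -> 'I_n -> 'I_n -> R) (H0 H : 'M[R]_n) (lam : R) :
  is_lie_algebra c -> bi_invariant c H0 -> is_metric H -> 0 < lam ->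
  (path_nonneg c H0 H <-> path_nonneg c (lam *: H0) H) /\
  (path_loc_nonneg c H0 H <-> path_loc_nonneg c (lam *: H0) H) /\
  (path_inf_nonneg c H0 H <-> path_inf_nonneg c (lam *: H0) H).
Proof.
move=> _ [[_ pdH0] _] [_ pdH] lam0; split; [|split].
- apply: (scalem_invariant (P := path_nonneg c ^~ H) _ pdH0 lam0) => B mu *.
  exact: path_nonneg_scalem.
- apply: (scalem_invariant (P := path_loc_nonneg c ^~ H) _ pdH0 lam0) => B mu *.
  exact: path_loc_nonneg_scalem.
- apply: (scalem_invariant (P := path_inf_nonneg c ^~ H) _ pdH0 lam0) => B mu *.
  exact: path_inf_nonneg_scalem.
Qed.
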